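(* Let $\mathcal{D}=\langle\mathcal{I},\eta,P\rangle$ be a deductive database and $\mathcal{R}$ a request. A repair (respectively, relevant repair, constrained repair) for $(\mathcal{D},\mathcal{R})$ exists if and only if a weak repair (respectively, relevant weak repair, constrained weak repair) for $(\mathcal{D},\mathcal{R})$ exists.
   Context: Fix a finite set $\Pi$ of relation symbols, partitioned into base and derived predicates, and a countably infinite set $\mathit{Dom}$ of constants containing a null value $\bot$; $\mathit{Dom}_d=\mathit{Dom}\setminus\{\bot\}$. Facts are ground atoms over $\Pi$ and $\mathit{Dom}$ ($\mathit{At}$ = all facts); definite facts contain no $\bot$. For tuples, $t\preceq t'$ if each $t_i=t'_i$ or $t_i=\bot$; $a\approx b$ if some $s$ has $a\preceq s$, $b\preceq s$. For $S\subseteq\mathit{At}$: $S^{\Downarrow}=\{a:\exists b\in S, a\preceq b\}$, $S^{\Uparrow}=\{a:\exists b\in S, b\preceq a\}$, $S^{\approx}=\{a:\exists b\in S, b\approx a\}$, $S^\sim=S^\approx\setminus S^\Downarrow$. An (indefinite) database is $\mathcal{I}=\langle D,E\rangle$, $D,E$ finite sets of facts; $\mathcal{I}_t=D^\Downarrow$, $\mathcal{I}_u=D^\sim\setminus E^\Uparrow$. A possible world of $\mathcal{I}$ is a set $W$ of definite facts with $\mathcal{I}_t\subseteq W^\Downarrow$ and $W\subseteq\mathcal{I}_t\cup\mathcal{I}_u$; $W\models a$ iff $a\in W^\Downarrow$, else $W\models\neg a$. Integrity constraints (ICs) are first-order sentences over $\Pi$ and constants $\mathit{Dom}_d$; possible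 worlds are read as interpretations with domain $\mathit{Dom}_d$; $\mathcal{W}(\mathcal{I},\eta)$ is the set of possible worlds of $\mathcal{I}$ satisfying all ICs in $\eta$. A view $P$ is a safe Datalog program with negation (answer-set semantics), containing no $\bot$, with no base predicate in rule heads. A deductive database is $\mathcal{D}=\langle\mathcal{I},\eta,P\rangle$; it is consistent if $\mathcal{W}(\mathcal{I},\eta)\neq\emptyset$ and for every $W\in\mathcal{W}(\mathcal{I},\eta)$, $W\cup P$ has answer sets; $\mathcal{W}(\mathcal{D})$ is the family of all those answer sets. A fact $a$ has truth value $v_{\mathcal{D}}(a)=\mathbf{t}$ if $W\models a$ for all $W\in\mathcal{W}(\mathcal{D})$, $\mathbf{f}$ if $W\models\neg a$ for all such $W$, and $\mathbf{u}$ otherwise; truth values are ordered $\mathbf{f}\le\mathbf{u}\le\mathbf{t}$. Update actions are $+a^D,+a^E,-a^D,-a^E$ for base facts $a$ (insert into / delete from $D$ or $E$); an update is a set $U$ of update actions not containing both $+a^D,-a^D$ nor both $+a^E,-a^E$. $\langle D,E\rangle\circ U=\langle (D\cup U^D_+)\setminus U^D_-,(E\cup U^E_+)\setminus U^E_-\rangle$, where $U^D_+=\{a:+a^D\in U\}$ etc.; $\mathcal{D}\circ U=\langle\mathcal{I}\circ U,\eta,P\rangle$. A request is a pair $\mathcal{R}=(\mathcal{R}_t,\mathcal{R}_f)$ of disjoint sets of facts. A weak repair for $(\mathcal{D},\mathcal{R})$ is an update $U$ such that $\mathcal{D}\circ U$ is consistent, $v_{\mathcal{D}\circ U}(a)=\mathbf{t}$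 for all $a\in\mathcal{R}_t$ and $v_{\mathcal{D}\circ U}(a)=\mathbf{f}$ for all $a\in\mathcal{R}_f$. A constant is relevant if it occurs in $\mathcal{D}$ or $\mathcal{R}$ or is $\bot$; a predicate is relevant if it occurs in $\mathcal{D}$ or $\mathcal{R}$; a weak repair is relevant if all its constants and predicates are relevant. $NC(\mathcal{D},\mathcal{R},U)$ is the set of non-null constants occurring in $U$ but not in $\mathcal{D}$ or $\mathcal{R}$. For updates $U,V$, $U\sqsubseteq V$ if $NC(\mathcal{D},\mathcal{R},U)\subsetneq NC(\mathcal{D},\mathcal{R},V)$, or these sets are equal and for every base fact $a$: if $v_{\mathcal{D}}(a)=\mathbf{t}$ then $v_{\mathcal{D}\circ U}(a)\ge v_{\mathcal{D}\circ V}(a)$; if $v_{\mathcal{D}}(a)=\mathbf{f}$ then $v_{\mathcal{D}\circ V}(a)\ge v_{\mathcal{D}\circ U}(a)$; if $v_{\mathcal{D}}(a)=\mathbf{u}$ then $v_{\mathcal{D}\circ U}(a)=\mathbf{u}$ or $v_{\mathcal{D}\circ V}(a)=v_{\mathcal{D}\circ U}(a)$. A (relevant) repair is a $\sqsubseteq$-minimal (relevant) weak repair. A relevant (weak) repair $U$ is constrained if there is no non-null constant $a$ in $U$ such that replacing some occurrences of $a$ in $U$ by a constant $b\neq a$ (possibly $b=\bot$) yields a weak repair; a constrained repair is a $\sqsubseteq$-minimal constrained weak repair. *)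

From Stdlib Require Import List Arith Classical ClassicalEpsilon.
Import ListNotations.
Set Implicit Arguments.
Unset Asymmetric Patterns.

Record Sig : Type := {
  Pred : Type;
  arity : Pred -> nat;
  is_base : Pred -> bool }.

(* Dom = option nat : [Some n] are the non-null constants (Dom_d = nat),
   [None] is the null value ⊥. *)
Definition Const := option nat.
Definition null : Const := None.

Definition fact (Sg : Sig) : Type := (Pred Sg * list Const)%type.

Definition wf_fact Sg (a : fact Sg) : Prop := length (snd a) = arity Sg (fst a).
Definition definite Sg (a : fact Sg) : Prop := forall c, In c (snd a) -> c <> null.
Definition base_fact Sg (a : fact Sg) : Prop := wf_fact a /\ is_base Sg (fst a) = true.

Definition tup_le (ts us : list Const) : Prop :=
  Forall2 (fun x y => x = y \/ x = null) ts us.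
Definition fact_le Sg (a b : fact Sg) : Prop := fst a = fst b /\ tup_le (snd a) (snd b).
Definition fact_approx Sg (a b : fact Sg) : Prop :=
  exists s, fact_le a s /\ fact_le b s.

Definition fset Sg := fact Sg -> Prop.
Definition Down Sg (X : fset Sg) : fset Sg := fun a => exists b, X b /\ fact_le a b.
Definition Up Sg (X : fset Sg) : fset Sg := fun a => exists b, X b /\ fact_le b a.
Definition Approx Sg (X : fset Sg) : fset Sg := fun a => exists b, X b /\ fact_approx b a.
Definition Sim Sg (X : fset Sg) : fset Sg := fun a => Approx X a /\ ~ Down X a.

Record idb (Sg : Sig) : Type := { Dset : fset Sg; Eset : fset Sg }.

Definition finite_set Sg (X : fset Sg) : Prop := exists l, forall a, X a -> In a l.

Definition I_t Sg (I : idb Sg) : fset Sg := Down (Dset I).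
Definition I_u Sg (I : idb Sg) : fset Sg := fun a => Sim (Dset I) a /\ ~ Up (Eset I) a.

Definition possible_world Sg (I : idb Sg) (W : fset Sg) : Prop :=
  (forall a, W a -> definite a) /\
  (forall a, I_t I a -> Down W a) /\
  (forall a, W a -> I_t I a \/ I_u I a).

Definition fsat Sg (W : fset Sg) (a : fact Sg) : Prop := Down W a.

Inductive term : Type := TVar (x : nat) | TConst (c : nat).

Inductive formula (Sg : Sig) : Type :=
| FAtom (p : Pred Sg) (ts : list term)
| FEq (t1 t2 : term)
| FFalse
| FNot (f : formula Sg)
| FAnd (f g : formula Sg)
| FOr (f g : formula Sg)
| FImp (f g : formula Sg)
| FAll (x : nat) (f : formula Sg)
| FEx (x : nat) (f : formula Sg).
Arguments FAtom {Sg}. Arguments FEq {Sg}. Arguments FFalse {Sg}. Arguments FNot {Sg}.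
Arguments FAnd {Sg}. Arguments FOr {Sg}. Arguments FImp {Sg}. Arguments FAll {Sg}. Arguments FEx {Sg}.

Definition eval_term (rho : nat -> nat) (t : term) : nat :=
  match t with TVar x => rho x | TConst c => c end.

Definition upd (rho : nat -> nat) (x d : nat) : nat -> nat :=
  fun y => if Nat.eqb y x then d else rho y.

(* interpretation with domain Dom_d = nat given by a set W of definite facts *)
Fixpoint holds Sg (W : fset Sg) (rho : nat -> nat) (f : formula Sg) : Prop :=
  match f with
  | FAtom p ts => W (p, map (fun t => Some (eval_term rho t)) ts)
  | FEq t1 t2 => eval_term rho t1 = eval_term rho t2
  | FFalse => False
  | FNot g => ~ holds W rho g
  | FAnd g h => holds W rho g /\ holds W rho h
  | FOr g h => holds W rho g \/ holds W rho h
  | FImp g h => holds W rho g -> holds W rho h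
  | FAll x g => forall d, holds W (upd rho x d) g
  | FEx x g => exists d, holds W (upd rho x d) g
  end.

Definition term_vars (t : term) : list nat :=
  match t with TVar x => [x] | TConst _ => [] end.

Fixpoint free_vars Sg (f : formula Sg) : list nat :=
  match f with
  | FAtom _ ts => flat_map term_vars ts
  | FEq t1 t2 => term_vars t1 ++ term_vars t2
  | FFalse => []
  | FNot g => free_vars g
  | FAnd g h | FOr g h | FImp g h => free_vars g ++ free_vars h
  | FAll x g | FEx x g => filter (fun y => negb (Nat.eqb y x)) (free_vars g)
  end.

Fixpoint wf_formula Sg (f : formula Sg) : Prop :=
  match f with
  | FAtom p ts => length ts = arity Sg p
  | FEq _ _ | FFalse => True
  | FNot g | FAll _ g | FEx _ g => wf_formula g
  | FAnd g h | FOr g h | FImp g h => wf_formula g /\ wf_formula h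
  end.

Definition sentence Sg (f : formula Sg) : Prop := wf_formula f /\ free_vars f = [].

Definition satisfies_ics Sg (W : fset Sg) (eta : list (formula Sg)) : Prop :=
  forall f, In f eta -> forall rho, holds W rho f.

Fixpoint formula_consts Sg (f : formula Sg) : list nat :=
  match f with
  | FAtom _ ts => flat_map (fun t => match t with TConst c => [c] | _ => [] end) ts
  | FEq t1 t2 => flat_map (fun t => match t with TConst c => [c] | _ => [] end) [t1; t2]
  | FFalse => []
  | FNot g | FAll _ g | FEx _ g => formula_consts g
  | FAnd g h | FOr g h | FImp g h => formula_consts g ++ formula_consts h
  end.

Fixpoint formula_pred_in Sg (p : Pred Sg) (f : formula Sg) : Prop :=
  match f with
  | FAtom q _ => q = p
  | FEq _ _ | FFalse => False
  | FNot g | FAll _ g | FEx _ g => formula_pred_in p g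
  | FAnd g h | FOr g h | FImp g h => formula_pred_in p g \/ formula_pred_in p h
  end.

(* terms contain only variables and non-null constants: no ⊥ in programs *)
Record atom (Sg : Sig) : Type := { apred : Pred Sg; aargs : list term }.
Record rule (Sg : Sig) : Type := { rhead : atom Sg; rpos : list (atom Sg); rneg : list (atom Sg) }.

Definition atom_vars Sg (a : atom Sg) : list nat := flat_map term_vars (aargs a).
Definition atom_consts Sg (a : atom Sg) : list nat :=
  flat_map (fun t => match t with TConst c => [c] | _ => [] end) (aargs a).
Definition wf_atom Sg (a : atom Sg) : Prop := length (aargs a) = arity Sg (apred a).

Definition safe_rule Sg (r : rule Sg) : Prop :=
  forall x, (In x (atom_vars (rhead r)) \/ exists n, In n (rneg r) /\ In x (atom_vars n)) ->
  exists q, In q (rpos r) /\ In x (atom_vars q).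

Definition rule_atoms Sg (r : rule Sg) : list (atom Sg) := rhead r :: rpos r ++ rneg r.

Definition wf_program Sg (P : list (rule Sg)) : Prop :=
  forall r, In r P ->
    safe_rule r /\ is_base Sg (apred (rhead r)) = false /\
    (forall a, In a (rule_atoms r) -> wf_atom a).

Definition ground_atom Sg (sigma : nat -> nat) (a : atom Sg) : fact Sg :=
  (apred a, map (fun t => Some (eval_term sigma t)) (aargs a)).

(* N is a model of the Gelfond–Lifschitz reduct of (W ∪ ground(P)) w.r.t. M *)
Definition reduct_model Sg (W : fset Sg) (P : list (rule Sg)) (M N : fset Sg) : Prop :=
  (forall a, W a -> N a) /\
  (forall r sigma, In r P ->
     (forall n, In n (rneg r) -> ~ M (ground_atom sigma n)) ->
     (forall q, In q (rpos r) -> N (ground_atom sigma q)) ->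
     N (ground_atom sigma (rhead r))).

Definition answer_set Sg (W : fset Sg) (P : list (rule Sg)) (M : fset Sg) : Prop :=
  reduct_model W P M M /\ (forall N, reduct_model W P M N -> forall a, M a -> N a).

Record ddb (Sg : Sig) : Type := { dI : idb Sg; deta : list (formula Sg); dP : list (rule Sg) }.

Definition wf_ddb Sg (D : ddb Sg) : Prop :=
  finite_set (Dset (dI D)) /\ finite_set (Eset (dI D)) /\
  (forall a, Dset (dI D) a -> wf_fact a) /\ (forall a, Eset (dI D) a -> wf_fact a) /\
  (forall f, In f (deta D) -> sentence f) /\ wf_program (dP D).

Definition ic_world Sg (D : ddb Sg) (W : fset Sg) : Prop :=
  possible_world (dI D) W /\ satisfies_ics W (deta D).

Definition consistent Sg (D : ddb Sg) : Prop :=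
  (exists W, ic_world D W) /\
  (forall W, ic_world D W -> exists M, answer_set W (dP D) M).

Definition in_WD Sg (D : ddb Sg) (M : fset Sg) : Prop :=
  exists W, ic_world D W /\ answer_set W (dP D) M.

Inductive tv : Type := TT | UU | FF.

Definition tval Sg (D : ddb Sg) (a : fact Sg) : tv :=
  if excluded_middle_informative (forall M, in_WD D M -> fsat M a) then TT
  else if excluded_middle_informative (forall M, in_WD D M -> ~ fsat M a) then FF
  else UU.

Definition tv_rank (v : tv) : nat := match v with FF => 0 | UU => 1 | TT => 2 end.
Definition tv_le (v w : tv) : Prop := tv_rank v <= tv_rank w.

Inductive kind : Type := InsD | InsE | DelD | DelE.
Definition action (Sg : Sig) : Type := (kind * fact Sg)%type.
Definition update (Sg : Sig) : Type := list (action Sg).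

Definition is_update Sg (U : update Sg) : Prop :=
  (forall k a, In (k, a) U -> base_fact a) /\
  (forall a, ~ (In (InsD, a) U /\ In (DelD, a) U)) /\
  (forall a, ~ (In (InsE, a) U /\ In (DelE, a) U)).

Definition apply_idb Sg (I : idb Sg) (U : update Sg) : idb Sg :=
  {| Dset := fun a => (Dset I a \/ In (InsD, a) U) /\ ~ In (DelD, a) U;
     Eset := fun a => (Eset I a \/ In (InsE, a) U) /\ ~ In (DelE, a) U |}.

Definition apply_ddb Sg (D : ddb Sg) (U : update Sg) : ddb Sg :=
  {| dI := apply_idb (dI D) U; deta := deta D; dP := dP D |}.

Record request (Sg : Sig) : Type := { Rt : list (fact Sg); Rf : list (fact Sg) }.

Definition wf_request Sg (R : request Sg) : Prop :=
  (forall a, In a (Rt R) -> wf_fact a) /\ (forall a, In a (Rf R) -> wf_fact a) /\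
  (forall a, In a (Rt R) -> ~ In a (Rf R)).

Definition weak_repair Sg (D : ddb Sg) (R : request Sg) (U : update Sg) : Prop :=
  is_update U /\ consistent (apply_ddb D U) /\
  (forall a, In a (Rt R) -> tval (apply_ddb D U) a = TT) /\
  (forall a, In a (Rf R) -> tval (apply_ddb D U) a = FF).

Definition const_in_fact Sg (c : nat) (a : fact Sg) : Prop := In (Some c) (snd a).

Definition const_in_ddb Sg (D : ddb Sg) (c : nat) : Prop :=
  (exists a, Dset (dI D) a /\ const_in_fact c a) \/
  (exists a, Eset (dI D) a /\ const_in_fact c a) \/
  (exists f, In f (deta D) /\ In c (formula_consts f)) \/
  (exists r a, In r (dP D) /\ In a (rule_atoms r) /\ In c (atom_consts a)).

Definition pred_in_ddb Sg (D : ddb Sg) (p : Pred Sg) : Prop :=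
  (exists a, Dset (dI D) a /\ fst a = p) \/
  (exists a, Eset (dI D) a /\ fst a = p) \/
  (exists f, In f (deta D) /\ formula_pred_in p f) \/
  (exists r a, In r (dP D) /\ In a (rule_atoms r) /\ apred a = p).

Definition const_in_request Sg (R : request Sg) (c : nat) : Prop :=
  exists a, (In a (Rt R) \/ In a (Rf R)) /\ const_in_fact c a.

Definition pred_in_request Sg (R : request Sg) (p : Pred Sg) : Prop :=
  exists a, (In a (Rt R) \/ In a (Rf R)) /\ fst a = p.

Definition const_in_update Sg (U : update Sg) (c : nat) : Prop :=
  exists k a, In (k, a) U /\ const_in_fact c a.

Definition relevant_const Sg (D : ddb Sg) (R : request Sg) (c : Const) : Prop :=
  match c with None => True | Some n => const_in_ddb D n \/ const_in_request R n end.

Definition relevant_pred Sg (D : ddb Sg) (R : request Sg) (p : Pred Sg) : Prop :=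
  pred_in_ddb D p \/ pred_in_request R p.

Definition relevant_update Sg (D : ddb Sg) (R : request Sg) (U : update Sg) : Prop :=
  forall k a, In (k, a) U ->
    relevant_pred D R (fst a) /\ (forall c, In c (snd a) -> relevant_const D R c).

Definition NC Sg (D : ddb Sg) (R : request Sg) (U : update Sg) (c : nat) : Prop :=
  const_in_update U c /\ ~ const_in_ddb D c /\ ~ const_in_request R c.

Definition upd_le Sg (D : ddb Sg) (R : request Sg) (U V : update Sg) : Prop :=
  ((forall c, NC D R U c -> NC D R V c) /\ (exists c, NC D R V c /\ ~ NC D R U c)) \/
  ((forall c, NC D R U c <-> NC D R V c) /\
   (forall a, base_fact a ->
      (tval D a = TT -> tv_le (tval (apply_ddb D V) a) (tval (apply_ddb D U) a)) /\
      (tval D a = FF -> tv_le (tval (apply_ddb D U) a) (tval (apply_ddb D V) a)) /\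
      (tval D a = UU -> tval (apply_ddb D U) a = UU \/
                        tval (apply_ddb D V) a = tval (apply_ddb D U) a))).

Definition minimal_in Sg (D : ddb Sg) (R : request Sg) (C : update Sg -> Prop) (U : update Sg) : Prop :=
  C U /\ (forall V, C V -> upd_le D R V U -> upd_le D R U V).

Definition repair Sg (D : ddb Sg) (R : request Sg) (U : update Sg) : Prop :=
  minimal_in D R (weak_repair D R) U.

Definition relevant_weak_repair Sg (D : ddb Sg) (R : request Sg) (U : update Sg) : Prop :=
  weak_repair D R U /\ relevant_update D R U.

Definition relevant_repair Sg (D : ddb Sg) (R : request Sg) (U : update Sg) : Prop :=
  minimal_in D R (relevant_weak_repair D R) U.

Definition repl_action Sg (c : nat) (b : Const) (u v : action Sg) : Prop :=
  fst u = fst v /\ fst (snd u) = fst (snd v) /\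
  Forall2 (fun x y => y = x \/ (x = Some c /\ y = b)) (snd (snd u)) (snd (snd v)).

Definition replaces Sg (c : nat) (b : Const) (U V : update Sg) : Prop :=
  Forall2 (repl_action c b) U V /\ U <> V.

(* U is given as a duplicate-free list, so that occurrences in U are
   occurrences in the set U *)
Definition constrained_weak_repair Sg (D : ddb Sg) (R : request Sg) (U : update Sg) : Prop :=
  relevant_weak_repair D R U /\ NoDup U /\
  ~ (exists c b V, const_in_update U c /\ b <> Some c /\
                   replaces c b U V /\ weak_repair D R V).

Definition constrained_repair Sg (D : ddb Sg) (R : request Sg) (U : update Sg) : Prop :=
  minimal_in D R (constrained_weak_repair D R) U.

(* The order ⊑ is lexicographic: first strict inclusion of the sets of new
   constants NC, then a preorder comparing the changes of truth values.  Both
   levels are well founded.  Every NC set is finite, so strict inclusion has no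
   infinite descending chain.  Once NC is fixed, every update in the class only
   uses the finitely many constants of D, of the request and of that NC set,
   and the finitely many predicates, so it denotes one of finitely many updated
   databases; a preorder on a finite set has minimal elements. *)
From Stdlib Require Import List Arith Classical ClassicalEpsilon
  FunctionalExtensionality PropExtensionality Lia.
Import ListNotations.
Set Implicit Arguments.

Lemma finite_preorder_has_minimal {K : Type} (T : K -> K -> Prop)
  (T_refl : forall x, T x x) (T_trans : forall x y z, T x y -> T y z -> T x z) :
  forall (ks : list K) (P : K -> Prop), (exists x, P x) -> (forall x, P x -> In x ks) ->
  exists x, P x /\ forall y, P y -> T y x -> T x y.
Proof.
  induction ks as [|k ks IH]; intros P [x0 Px0] HP.
  - destruct (HP _ Px0).
  - destruct (classic (exists x, P x /\ x <> k)) as [[x1 Hx1]|Hnone].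
    + destruct (IH (fun x => P x /\ x <> k)) as [m [[Pm _] Hm]].
      { now exists x1. }
      { intros x [Px Hxk]. destruct (HP _ Px); [congruence|assumption]. }
      destruct (classic (P k /\ T k m /\ ~ T m k)) as [[Pk [Tkm _]]|Hk].
      * exists k. split; [exact Pk|]. intros y Py Tyk.
        destruct (classic (y = k)) as [->|Hyk]; [apply T_refl|].
        apply T_trans with m; [exact Tkm|].
        apply Hm; [now split|]. eapply T_trans; eauto.
      * exists m. split; [exact Pm|]. intros y Py Tym.
        destruct (classic (y = k)) as [->|Hyk].
        -- apply NNPP. intro nTmk. apply Hk. auto.
        -- apply Hm; auto.
    + assert (Honly : forall y, P y -> y = k)
        by (intros y Py; apply NNPP; intro; apply Hnone; eauto).
      exists x0. split; [exact Px0|]. intros y Py _.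
      rewrite (Honly y Py), (Honly x0 Px0). apply T_refl.
Qed.

Lemma exists_inclusion_minimal {A : Type} (C : A -> Prop) (S : A -> nat -> Prop) x0 l0 :
  C x0 -> (forall c, S x0 c -> In c l0) ->
  exists x, C x /\
    forall y, C y -> (forall c, S y c -> S x c) -> forall c, S x c -> S y c.
Proof.
  intros Cx0 Hl0.
  enough (Hgen : forall n x l, length l <= n -> C x -> (forall c, S x c -> In c l) ->
            exists x', C x' /\
              forall y, C y -> (forall c, S y c -> S x' c) -> forall c, S x' c -> S y c)
    by exact (Hgen _ x0 l0 (le_n _) Cx0 Hl0).
  induction n as [|n IH]; intros x l Hlen Cx Hl;
    (destruct (classic (exists y, C y /\ (forall c, S y c -> S x c) /\
                                  exists c, S x c /\ ~ S y c))
       as [[y [Cy [Hyx [c [Hc Hnc]]]]]|Hnone];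
     [|exists x; split; [exact Cx|]; intros y Cy Hyx c Hc; apply NNPP; intro nSy;
       apply Hnone; exists y; split; [exact Cy|split; [exact Hyx|eauto]]]).
  - destruct l; [destruct (Hl c Hc)|simpl in Hlen; lia].
  - apply (IH y (remove Nat.eq_dec c l)); [|exact Cy|].
    + pose proof (remove_length_lt Nat.eq_dec l c (Hl c Hc)). lia.
    + intros c' Hc'. apply in_in_remove; [intros ->; contradiction|auto].
Qed.

Fixpoint tuples (n : nat) (L : list Const) : list (list Const) :=
  match n with
  | 0 => [[]]
  | S n => flat_map (fun x => map (cons x) (tuples n L)) L
  end.

Lemma in_tuples L : forall t, (forall x, In x t -> In x L) -> In t (tuples (length t) L).
Proof.
  induction t as [|x t IH]; intros HL; simpl; auto.
  apply in_flat_map. exists x. split; [apply HL; now left|].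
  apply in_map. apply IH. intros; apply HL; now right.
Qed.

Fixpoint sublists {A : Type} (l : list A) : list (list A) :=
  match l with
  | [] => [[]]
  | x :: l => map (cons x) (sublists l) ++ sublists l
  end.

Lemma filter_in_sublists {A : Type} (f : A -> bool) l : In (filter f l) (sublists l).
Proof.
  induction l as [|x l IH]; simpl; auto.
  destruct (f x); apply in_app_iff; [left; apply in_map|right]; auto.
Qed.

Lemma incl_same_elements_sublist {A : Type} (V l : list A) :
  incl V l -> exists s, In s (sublists l) /\ forall x, In x s <-> In x V.
Proof.
  intros HVl.
  exists (filter (fun x => if excluded_middle_informative (In x V) then true else false) l).
  split; [apply filter_in_sublists|]. intro x. rewrite filter_In.
  destruct (excluded_middle_informative (In x V)) as [HxV|HxV].
  - split; [tauto|]. intro; split; [apply HVl|]; auto.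
  - split; [intros [_ Hf]; discriminate Hf|contradiction].
Qed.

Definition fact_consts {Sg : Sig} (a : fact Sg) : list nat :=
  flat_map (fun o => match o with Some c => [c] | None => [] end) (snd a).

Lemma in_fact_consts (Sg : Sig) c (a : fact Sg) : const_in_fact c a -> In c (fact_consts a).
Proof. intro H. apply in_flat_map. exists (Some c). simpl; auto. Qed.

Lemma const_in_request_finite (Sg : Sig) (R : request Sg) :
  exists l, forall c, const_in_request R c -> In c l.
Proof.
  exists (flat_map fact_consts (Rt R ++ Rf R)).
  intros c [a [Ha Hc]]. apply in_flat_map. exists a.
  rewrite in_app_iff. auto using in_fact_consts.
Qed.

Lemma const_in_update_finite (Sg : Sig) (U : update Sg) :
  exists l, forall c, const_in_update U c -> In c l.
Proof.
  exists (flat_map (fun u => fact_consts (snd u)) U).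
  intros c [k [a [Hin Hc]]]. apply in_flat_map. exists (k, a). auto using in_fact_consts.
Qed.

Lemma const_in_ddb_finite (Sg : Sig) (D : ddb Sg) :
  wf_ddb D -> exists l, forall c, const_in_ddb D c -> In c l.
Proof.
  intros [[ld Hd] [[le He] _]].
  exists (flat_map fact_consts ld ++ flat_map fact_consts le ++
          flat_map (@formula_consts Sg) (deta D) ++
          flat_map (fun r => flat_map (@atom_consts Sg) (rule_atoms r)) (dP D)).
  intros c [[a [Ha Hc]]|[[a [Ha Hc]]|[[f [Hf Hc]]|[r [a [Hr [Ha Hc]]]]]]];
    rewrite !in_app_iff.
  - left. apply in_flat_map. eauto using in_fact_consts.
  - right; left. apply in_flat_map. eauto using in_fact_consts.
  - right; right; left. apply in_flat_map. eauto.
  - right; right; right. apply in_flat_map. exists r. split; auto. apply in_flat_map. eauto.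
Qed.

Lemma apply_ddb_same_elements (Sg : Sig) (D : ddb Sg) U V :
  (forall x, In x U <-> In x V) -> apply_ddb D U = apply_ddb D V.
Proof.
  intro H. unfold apply_ddb, apply_idb. f_equal. f_equal; apply functional_extensionality;
    intro a; apply propositional_extensionality; rewrite !H; tauto.
Qed.

Definition actions_over {Sg : Sig} (lp : list (Pred Sg)) (L : list Const) : list (action Sg) :=
  flat_map (fun k => flat_map (fun p => map (fun t => (k, (p, t))) (tuples (arity Sg p) L)) lp)
    [InsD; InsE; DelD; DelE].

Lemma in_actions_over (Sg : Sig) (lp : list (Pred Sg)) L k (a : fact Sg) :
  (forall p, In p lp) -> base_fact a -> (forall c, In c (snd a) -> In c L) ->
  In (k, a) (actions_over lp L).
Proof.
  destruct a as [p t]. intros Hlp [Hwf _] HL. unfold wf_fact in Hwf; simpl in *.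
  apply in_flat_map. exists k. split; [destruct k; simpl; tauto|].
  apply in_flat_map. exists p. split; [auto|]. apply (in_map (fun t => (k, (p, t)))).
  rewrite <- Hwf. now apply in_tuples.
Qed.

Lemma updates_over_finite (Sg : Sig) (Hfin : exists l : list (Pred Sg), forall p, In p l)
  (D : ddb Sg) (L : list Const) :
  exists ds, forall V, is_update V ->
    (forall k a c, In (k, a) V -> In c (snd a) -> In c L) -> In (apply_ddb D V) ds.
Proof.
  destruct Hfin as [lp Hlp].
  exists (map (apply_ddb D) (sublists (actions_over lp L))).
  intros V [Hbase _] HL.
  destruct (@incl_same_elements_sublist _ V (actions_over lp L)) as [s [Hs Hsame]].
  { intros [k a] Hin. apply in_actions_over; eauto. }
  rewrite (apply_ddb_same_elements D V s) by (intro; now rewrite Hsame).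
  now apply in_map.
Qed.

Section Minimal_repairs.

Variables (Sg : Sig) (D : ddb Sg) (R : request Sg).

(* The second disjunct of [upd_le], on the databases reached by two updates. *)
Definition tv_change_le (X Y : ddb Sg) : Prop :=
  forall a, base_fact a ->
    (tval D a = TT -> tv_le (tval Y a) (tval X a)) /\
    (tval D a = FF -> tv_le (tval X a) (tval Y a)) /\
    (tval D a = UU -> tval X a = UU \/ tval Y a = tval X a).

Lemma tv_change_le_refl X : tv_change_le X X.
Proof. intros a _. unfold tv_le. auto. Qed.

Lemma tv_change_le_trans X Y Z : tv_change_le X Y -> tv_change_le Y Z -> tv_change_le X Z.
Proof.
  intros H1 H2 a Ha. destruct (H1 a Ha) as [A1 [B1 C1]], (H2 a Ha) as [A2 [B2 C2]].
  unfold tv_le in *. split; [|split]; intro h.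
  - specialize (A1 h). specialize (A2 h). lia.
  - specialize (B1 h). specialize (B2 h). lia.
  - destruct (C1 h) as [e|e]; auto.
    destruct (C2 h) as [e'|e']; [left|right]; congruence.
Qed.

Lemma consts_bounded_by_NC U V c :
  (forall c, NC D R V c -> NC D R U c) -> const_in_update V c ->
  const_in_ddb D c \/ const_in_request R c \/ const_in_update U c.
Proof.
  intros HVU HV.
  destruct (classic (const_in_ddb D c)); [now left|].
  destruct (classic (const_in_request R c)); [now right; left|].
  right; right. now apply HVU.
Qed.

Theorem minimal_in_exists (Hfin : exists l : list (Pred Sg), forall p, In p l)
  (HD : wf_ddb D) (C : update Sg -> Prop) (HC : forall U, C U -> is_update U) :
  (exists U, C U) -> exists U, minimal_in D R C U.
Proof.
  intros [U0 CU0].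
  destruct (const_in_update_finite U0) as [l0 Hl0].
  destruct (@exists_inclusion_minimal _ C (NC D R) U0 l0 CU0)
    as [U [CU HU]]; [intros c [Hc _]; auto|].
  set (C' := fun V => C V /\ forall c, NC D R V c <-> NC D R U c).
  destruct (const_in_ddb_finite HD) as [lD HlD].
  destruct (const_in_request_finite R) as [lR HlR].
  destruct (const_in_update_finite U) as [lU HlU].
  destruct (updates_over_finite Hfin D (None :: map Some (lD ++ lR ++ lU))) as [ds Hds].
  destruct (finite_preorder_has_minimal tv_change_le tv_change_le_refl tv_change_le_trans ds
              (fun X => exists V, C' V /\ X = apply_ddb D V))
    as [X [[W [[CW HWU] ->]] HW]].
  - exists (apply_ddb D U), U. split; [split|]; tauto.
  - intros X [V [[CV HVU] ->]]. apply Hds; [now apply HC|].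
    intros k a [c|] Hin Hc; [|now left]. right. apply in_map.
    destruct (@consts_bounded_by_NC U V c) as [H|[H|H]];
      [apply HVU|exists k, a; auto|..]; rewrite !in_app_iff; auto.
  - exists W. split; [exact CW|]. intros V CV [[HVW [c [Hc Hnc]]]|[HVW Htv]].
    + exfalso. apply Hnc, (HU V CV); [intros c' h; apply HWU; auto|apply HWU, Hc].
    + right. split; [intro c; symmetry; apply HVW|].
      apply HW; [|exact Htv]. exists V. split; [|reflexivity].
      split; [exact CV|]. intro c. rewrite HVW. apply HWU.
Qed.

End Minimal_repairs.

Theorem proposition2 (Sg : Sig) (Hfin : exists l : list (Pred Sg), forall p, In p l)
  (D : ddb Sg) (R : request Sg) :
  wf_ddb D -> wf_request R ->
  ((exists U, repair D R U) <-> (exists U, weak_repair D R U)) /\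
  ((exists U, relevant_repair D R U) <-> (exists U, relevant_weak_repair D R U)) /\
  ((exists U, constrained_repair D R U) <-> (exists U, constrained_weak_repair D R U)).
Proof.
  intros HD _.
  assert (Hexists : forall C : update Sg -> Prop, (forall U, C U -> is_update U) ->
            (exists U, minimal_in D R C U) <-> (exists U, C U)).
  { intros C HC. split; [intros [U [CU _]]; eauto|]. now apply minimal_in_exists. }
  split; [|split]; apply Hexists; intro U;
    unfold constrained_weak_repair, relevant_weak_repair, weak_repair; tauto.
Qed.
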